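(* For every integer $t$, \begin{align*} \sum_{n=1}^\infty\binom{2n}{n}\frac{O_nL_{n+t}}{12^n}&=\frac{\sqrt{15}\sqrt{\alpha+2}}{10}\left((\alpha^t+\beta^{t+1})\ln\alpha-(\alpha^t-\beta^{t+1})\ln\Bigl(\frac{\sqrt5}{3}\Bigr)\right),\\ \sum_{n=1}^\infty\binom{2n}{n}\frac{O_nF_{n+t}}{12^n}&=\frac{\sqrt3\sqrt{\alpha+2}}{10}\left((\alpha^t-\beta^{t+1})\ln\alpha-(\alpha^t+\beta^{t+1})\ln\Bigl(\frac{\sqrt5}{3}\Bigr)\right), \end{align*} and, for every gibonacci sequence $G_j=G_j(a,b)$, \begin{align*} \sum_{n=1}^\infty\binom{2n}{n}\frac{O_nG_{n+t}}{12^n}&=\frac{\sqrt3\sqrt{\alpha+2}}{10}\Bigl(\bigl(a(\alpha^{t-1}-\beta^t)+b(\alpha^t-\beta^{t+1})\bigr)\ln\alpha\\ &\qquad-\bigl(a(\alpha^{t-1}+\beta^t)+b(\alpha^t+\beta^{t+1})\bigr)\ln\Bigl(\frac{\sqrt5}{3}\Bigr)\Bigr). \end{align*}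
   Context: $O_n=\sum_{j=1}^n\frac1{2j-1}$. $F_n$ and $L_n$ are the Fibonacci and Lucas numbers ($F_0=0,F_1=1$, $L_0=2,L_1=1$, $u_n=u_{n-1}+u_{n-2}$), extended to all integers by the recurrence. $\alpha=(1+\sqrt5)/2$, $\beta=-1/\alpha$. For numbers $a,b$ not both zero, the gibonacci sequence $G_j=G_j(a,b)$ is defined by $G_0=a$, $G_1=b$, $G_j=G_{j-1}+G_{j-2}$, extended to negative indices by $G_{-j}=G_{-(j-2)}-G_{-(j-1)}$; equivalently $G_j=\frac{(b-a\beta)\alpha^j+(a\alpha-b)\beta^j}{\alpha-\beta}$. *)

From Stdlib Require Import Reals ZArith.
From Coquelicot Require Import Coquelicot.
Open Scope R_scope.

Fixpoint Onum (n : nat) : R :=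
  match n with
  | 0%nat => 0
  | S m => Onum m + / (2 * INR (S m) - 1)
  end.

Fixpoint gib_pos (a b : R) (n : nat) : R :=
  match n with
  | 0%nat => a
  | 1%nat => b
  | S ((S m) as k) => gib_pos a b k + gib_pos a b m
  end.

(* backward part: gib_neg a b n = G_{-n}, using G_{-j} = G_{-(j-2)} - G_{-(j-1)} *)
Fixpoint gib_neg (a b : R) (n : nat) : R :=
  match n with
  | 0%nat => a
  | 1%nat => b - a
  | S ((S m) as k) => gib_neg a b m - gib_neg a b k
  end.

Definition G (a b : R) (j : Z) : R :=
  match j with
  | Z0 => a
  | Zpos p => gib_pos a b (Pos.to_nat p)
  | Zneg p => gib_neg a b (Pos.to_nat p)
  end.

Definition Fib (j : Z) : R := G 0 1 j.
Definition Luc (j : Z) : R := G 2 1 j.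

Definition alpha : R := (1 + sqrt 5) / 2.
Definition beta : R := - / alpha.

From Stdlib Require Import Reals ZArith Lia Lra Psatz.
From Coquelicot Require Import Coquelicot.
Open Scope R_scope.

(* Let B(x) = sum_n C(2n,n) x^n and A(x) = sum_n C(2n,n) O_n x^n.  The recurrence
   (n+1) C(2n+2,n+1) = (4n+2) C(2n,n) gives (1-4x) B' = 2B and (1-4x) A' = 2A + 2B
   on |x| < 1/4, whence B(x) = 1/sqrt(1-4x) and A(x) = -ln(1-4x)/(2 sqrt(1-4x)).
   By Binet's formula G_(n+t) is a combination of alpha^n and beta^n, so each sum is a
   combination of A(alpha/12) and A(beta/12); these are evaluated using
   1 - alpha/3 = sqrt5/(3 alpha) and 1 - beta/3 = sqrt5 alpha/3. *)


Definition cbinom (n : nat) : R := Binomial.C (2 * n) n.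
Definition cbinom_Onum (n : nat) : R := cbinom n * Onum n.

Lemma cbinom_0 : cbinom 0 = 1.
Proof. unfold cbinom, Binomial.C; simpl; field. Qed.

Lemma cbinom_rec n : INR (S n) * cbinom (S n) = (4 * INR n + 2) * cbinom n.
Proof.
  unfold cbinom, Binomial.C.
  replace (2 * S n)%nat with (S (S (2 * n))) by lia.
  replace (S (S (2 * n)) - S n)%nat with (S n) by lia.
  replace (2 * n - n)%nat with n by lia.
  change (Factorial.fact (S (S (2 * n))))
    with (S (S (2 * n)) * (S (2 * n) * Factorial.fact (2 * n)))%nat.
  change (Factorial.fact (S n)) with (S n * Factorial.fact n)%nat.
  rewrite !mult_INR, !S_INR, mult_INR; simpl (INR 2).
  pose proof (INR_fact_neq_0 n); pose proof (INR_fact_neq_0 (2 * n)); pose proof (pos_INR n).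
  field; repeat split; lra.
Qed.

Lemma cbinom_bounds n : 0 <= cbinom n <= 4 ^ n.
Proof.
  induction n as [|n IH].
  - rewrite cbinom_0; simpl; lra.
  - pose proof (cbinom_rec n) as Hrec; rewrite S_INR in Hrec.
    pose proof (pos_INR n); simpl; nra.
Qed.

Lemma Onum_S n : Onum (S n) = Onum n + / (2 * INR n + 1).
Proof.
  change (Onum (S n)) with (Onum n + / (2 * INR (S n) - 1)).
  rewrite S_INR; do 2 f_equal; ring.
Qed.

Lemma Onum_bounds n : 0 <= Onum n <= INR n.
Proof.
  induction n as [|n IH]; [simpl; lra|].
  rewrite Onum_S, S_INR; pose proof (pos_INR n).
  assert (0 < / (2 * INR n + 1) <= 1).
  { split; [apply Rinv_0_lt_compat; lra|].
    rewrite <- Rinv_1; apply Rinv_le_contravar; lra. }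
  lra.
Qed.

Lemma cbinom_Onum_rec n :
  INR (S n) * cbinom_Onum (S n) = (4 * INR n + 2) * cbinom_Onum n + 2 * cbinom n.
Proof.
  unfold cbinom_Onum; rewrite Onum_S.
  replace (INR (S n) * (cbinom (S n) * (Onum n + / (2 * INR n + 1))))
    with (INR (S n) * cbinom (S n) * (Onum n + / (2 * INR n + 1))) by ring.
  rewrite cbinom_rec; pose proof (pos_INR n); field; lra.
Qed.

Lemma CV_radius_le_abs (a b : nat -> R) :
  (forall n, Rabs (a n) <= Rabs (b n)) -> Rbar_le (CV_radius b) (CV_radius a).
Proof.
  intros Hab; apply (is_lub_Rbar_subset (CV_disk a) (CV_disk b));
    try apply Lub_Rbar_correct.
  intros x Hb; refine (@ex_series_le R_AbsRing R_CompleteNormedModule _ _ _ Hb).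
  intros n; change norm with Rabs; rewrite Rabs_Rabsolu, !Rabs_mult.
  apply Rmult_le_compat_r; [apply Rabs_pos|apply Hab].
Qed.

Lemma CV_radius_pow (q : R) : 0 < q -> CV_radius (fun n => q ^ n) = / q.
Proof.
  intros Hq; apply CV_radius_finite_DAlembert; [intros n; apply pow_nonzero; lra|exact Hq|].
  apply (is_lim_seq_ext (fun _ => q)); [|apply is_lim_seq_const].
  intros n; simpl.
  replace (q * q ^ n / q ^ n) with q by (field; apply pow_nonzero; lra).
  rewrite Rabs_right; lra.
Qed.

Lemma CV_radius_cbinom : Rbar_le (/ 4) (CV_radius cbinom).
Proof.
  rewrite <- (CV_radius_pow 4) by lra; apply CV_radius_le_abs; intros n.
  destruct (cbinom_bounds n); rewrite !Rabs_right by lra; lra.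
Qed.

Lemma CV_radius_cbinom_Onum : Rbar_le (/ 4) (CV_radius cbinom_Onum).
Proof.
  (* since O_n <= n, the coefficients are dominated by those of x d/dx sum 4^n x^n *)
  rewrite <- (CV_radius_pow 4), <- CV_radius_derive, <- CV_radius_incr_1 by lra.
  apply CV_radius_le_abs; intros [|n]; unfold cbinom_Onum, PS_incr_1, PS_derive.
  - simpl Onum; rewrite Rmult_0_r, Rabs_R0; apply Rabs_pos.
  - destruct (cbinom_bounds (S n)), (Onum_bounds (S n)).
    rewrite !Rabs_right by nra; nra.
Qed.

Lemma PSeries_derive_ode (c e : nat -> R) (q x v : R) :
  Rbar_lt (Rabs x) (CV_radius c) ->
  (forall n, INR (S n) * c (S n) - q * (INR n * c n) = e n) ->
  is_pseries e x v ->
  (1 - q * x) * PSeries (PS_derive c) x = v.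
Proof.
  intros Hx Hce Hv.
  assert (Hd := ex_pseries_derive _ _ Hx).
  rewrite <- (is_pseries_unique _ _ _ Hv).
  rewrite (PSeries_ext e (PS_minus (PS_derive c) (PS_scal q (PS_incr_1 (PS_derive c))))).
  - rewrite PSeries_minus, PSeries_scal, PSeries_incr_1; [ring|exact Hd|].
    apply ex_pseries_scal; [apply Rmult_comm|apply ex_pseries_incr_1, Hd].
  - intros n; rewrite <- Hce; unfold PS_minus, PS_scal, PS_incr_1, PS_derive.
    destruct n; simpl; unfold plus, opp, scal, zero; simpl; unfold mult; simpl; ring.
Qed.

Lemma is_derive_zero_const (f : R -> R) (r x : R) :
  (forall t, Rabs t < r -> is_derive f t 0) -> Rabs x < r -> f x = f 0.
Proof.
  intros Hf Hx; apply Rabs_def2 in Hx.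
  destruct (Rtotal_order x 0) as [Hlt|[->|Hgt]]; [| reflexivity |symmetry];
    apply eq_is_derive; try lra; intros t Ht; apply Hf, Rabs_def1; lra.
Qed.

Lemma is_derive_eq (f : R -> R) (x l l' : R) : is_derive f x l -> l = l' -> is_derive f x l'.
Proof. now intros H <-. Qed.

Lemma inside_quarter (c : nat -> R) (x : R) :
  Rbar_le (/ 4) (CV_radius c) -> Rabs x < / 4 -> Rbar_lt (Rabs x) (CV_radius c).
Proof. intros Hc Hx; exact (Rbar_lt_le_trans (Rabs x) (/ 4) _ Hx Hc). Qed.

Lemma is_derive_sqrt_1_4x (t : R) :
  t < / 4 -> is_derive (fun t => sqrt (1 - 4 * t)) t (-2 / sqrt (1 - 4 * t)).
Proof.
  intros Ht; assert (0 < sqrt (1 - 4 * t)) by (apply sqrt_lt_R0; lra).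
  auto_derive; [lra|].
  replace (1 + - (4 * t)) with (1 - 4 * t) by ring; field; lra.
Qed.

Lemma PSeries_cbinom (x : R) : Rabs x < / 4 -> PSeries cbinom x = / sqrt (1 - 4 * x).
Proof.
  intros Hx.
  assert (Hconst : sqrt (1 - 4 * x) * PSeries cbinom x = sqrt (1 - 4 * 0) * PSeries cbinom 0).
  { apply (is_derive_zero_const (fun t => sqrt (1 - 4 * t) * PSeries cbinom t) (/ 4));
      [|exact Hx].
    intros t Ht; pose proof (Rabs_def2 _ _ Ht) as [Ht1 _].
    assert (Hr := inside_quarter _ _ CV_radius_cbinom Ht).
    assert (Hode : (1 - 4 * t) * PSeries (PS_derive cbinom) t = 2 * PSeries cbinom t).
    { apply (PSeries_derive_ode _ (PS_scal 2 cbinom)); [exact Hr| |].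
      - intros n; rewrite cbinom_rec; unfold PS_scal, scal; simpl; unfold mult; simpl; ring.
      - apply (@is_pseries_scal R_AbsRing R_NormedModule); [apply Rmult_comm|].
        apply PSeries_correct, CV_radius_inside, Hr. }
    apply (is_derive_eq _ _ _ _ (is_derive_mult _ _ _ _ _ (is_derive_sqrt_1_4x t Ht1)
                                   (is_derive_PSeries _ _ Hr) Rmult_comm)).
    unfold plus, mult; simpl; unfold mult; simpl.
    assert (Hs : 0 < sqrt (1 - 4 * t)) by (apply sqrt_lt_R0; lra).
    assert (Hss := sqrt_sqrt (1 - 4 * t) ltac:(lra)).
    set (s := sqrt (1 - 4 * t)) in *; rewrite <- Hss in Hode.
    apply (Rmult_eq_reg_l s); [|lra].
    field_simplify; [|lra].
    rewrite <- Hode; ring. }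
  rewrite PSeries_0, cbinom_0, Rmult_0_r, Rminus_0_r, sqrt_1, Rmult_1_l in Hconst.
  assert (0 < sqrt (1 - 4 * x)) by (apply sqrt_lt_R0; apply Rabs_def2 in Hx; lra).
  apply (Rmult_eq_reg_l (sqrt (1 - 4 * x))); [rewrite Hconst; field|]; lra.
Qed.

Definition Onum_gf (x : R) : R := - ln (1 - 4 * x) / (2 * sqrt (1 - 4 * x)).

Lemma PSeries_cbinom_Onum (x : R) :
  Rabs x < / 4 -> PSeries cbinom_Onum x = Onum_gf x.
Proof.
  intros Hx.
  assert (Hconst : sqrt (1 - 4 * x) * PSeries cbinom_Onum x + ln (1 - 4 * x) / 2
                   = sqrt (1 - 4 * 0) * PSeries cbinom_Onum 0 + ln (1 - 4 * 0) / 2).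
  { apply (is_derive_zero_const
             (fun t => sqrt (1 - 4 * t) * PSeries cbinom_Onum t + ln (1 - 4 * t) / 2) (/ 4));
      [|exact Hx].
    intros t Ht; pose proof (Rabs_def2 _ _ Ht) as [Ht1 _].
    assert (Hr := inside_quarter _ _ CV_radius_cbinom_Onum Ht).
    assert (Hode : (1 - 4 * t) * PSeries (PS_derive cbinom_Onum) t
                   = 2 * PSeries cbinom_Onum t + 2 / sqrt (1 - 4 * t)).
    { apply (PSeries_derive_ode _ (PS_plus (PS_scal 2 cbinom_Onum) (PS_scal 2 cbinom)));
        [exact Hr| |].
      - intros n; rewrite cbinom_Onum_rec; unfold PS_plus, PS_scal, plus, scal; simpl.
        unfold mult; simpl; ring.
      - unfold Rdiv; rewrite <- (PSeries_cbinom t Ht).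
        apply (@is_pseries_plus R_AbsRing R_NormedModule);
          apply (@is_pseries_scal R_AbsRing R_NormedModule); try apply Rmult_comm;
          apply PSeries_correct, CV_radius_inside; auto using inside_quarter, CV_radius_cbinom. }
    assert (Hln : is_derive (fun t => ln (1 - 4 * t) / 2) t (-2 / (1 - 4 * t)))
      by (auto_derive; [lra|field; lra]).
    apply (is_derive_eq _ _ _ _
             (is_derive_plus _ _ _ _ _
                (is_derive_mult _ _ _ _ _ (is_derive_sqrt_1_4x t Ht1)
                   (is_derive_PSeries _ _ Hr) Rmult_comm) Hln)).
    unfold plus, mult; simpl; unfold mult; simpl.
    assert (Hs : 0 < sqrt (1 - 4 * t)) by (apply sqrt_lt_R0; lra).
    assert (Hss := sqrt_sqrt (1 - 4 * t) ltac:(lra)).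
    set (s := sqrt (1 - 4 * t)) in *; rewrite <- Hss in Hode |- *.
    apply (Rmult_eq_reg_l (s * s)); [|nra].
    field_simplify; [|lra].
    replace (s ^ 3 * PSeries (PS_derive cbinom_Onum) t)
      with (s * (s * s * PSeries (PS_derive cbinom_Onum) t)) by ring.
    rewrite Hode; field; lra. }
  rewrite PSeries_0, Rmult_0_r, Rminus_0_r, sqrt_1, ln_1, Rmult_1_l in Hconst.
  unfold cbinom_Onum at 2 in Hconst; simpl Onum in Hconst.
  assert (0 < sqrt (1 - 4 * x)) by (apply sqrt_lt_R0; apply Rabs_def2 in Hx; lra).
  unfold Onum_gf; apply (Rmult_eq_reg_l (sqrt (1 - 4 * x))); [|lra].
  field_simplify; [|lra]. lra.
Qed.

Lemma is_series_cbinom_Onum (x : R) :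
  Rabs x < / 4 -> is_series (fun k => cbinom_Onum (S k) * x ^ S k) (Onum_gf x).
Proof.
  intros Hx; apply (is_series_incr_1 (fun n => cbinom_Onum n * x ^ n)).
  unfold cbinom_Onum at 2; simpl Onum; unfold plus; simpl.
  rewrite Rmult_0_r, Rmult_0_l, Rplus_0_r.
  rewrite <- (PSeries_cbinom_Onum x Hx); apply is_pseries_R, PSeries_correct, CV_radius_inside.
  exact (inside_quarter _ _ CV_radius_cbinom_Onum Hx).
Qed.

Lemma alpha_sqr : alpha * alpha = alpha + 1.
Proof.
  unfold alpha; pose proof (sqrt_sqrt 5 ltac:(lra)); nra.
Qed.

Lemma sqrt5_alpha : sqrt 5 = 2 * alpha - 1.
Proof. unfold alpha; field. Qed.

Lemma alpha_bounds : 1 < alpha < 2.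
Proof.
  pose proof alpha_sqr; assert (0 <= sqrt 5) by apply sqrt_pos.
  assert (0 < alpha) by (unfold alpha; lra); nra.
Qed.

Lemma beta_alpha : beta = 1 - alpha.
Proof.
  pose proof alpha_sqr; pose proof alpha_bounds.
  unfold beta; apply (Rmult_eq_reg_l alpha); [|lra].
  field_simplify; [|lra]. nra.
Qed.

Lemma inv_alpha : / alpha = alpha - 1.
Proof.
  pose proof alpha_sqr; pose proof alpha_bounds.
  apply (Rmult_eq_reg_l alpha); [rewrite Rinv_r|]; lra.
Qed.

Lemma inv_beta : / beta = - alpha.
Proof.
  pose proof alpha_bounds; unfold beta; rewrite Rinv_opp, Rinv_inv; ring.
Qed.

Lemma alpha_sub_beta : alpha - beta = sqrt 5.
Proof. rewrite beta_alpha, sqrt5_alpha; ring. Qed.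

Lemma two_step_rec_binet (p q r s a b : R) (u : nat -> R) :
  r <> s -> r * r = p * r + q -> s * s = p * s + q ->
  (forall n, u (S (S n)) = p * u (S n) + q * u n) ->
  u 0%nat = a -> u 1%nat = b ->
  forall n, u n = ((b - a * s) * r ^ n + (a * r - b) * s ^ n) / (r - s).
Proof.
  intros Hrs Hr Hs Hu Hu0 Hu1.
  assert (Hpow : forall y n, y * y = p * y + q -> y ^ S (S n) = p * y ^ S n + q * y ^ n).
  { intros y n Hy; simpl; replace (y * (y * y ^ n)) with (y * y * y ^ n) by ring.
    rewrite Hy; ring. }
  assert (H : forall n, u n = ((b - a * s) * r ^ n + (a * r - b) * s ^ n) / (r - s)
                     /\ u (S n) = ((b - a * s) * r ^ S n + (a * r - b) * s ^ S n) / (r - s)).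
  { induction n as [|n [IH0 IH1]].
    - rewrite Hu0, Hu1; split; field; intros E; apply Hrs; lra.
    - split; [exact IH1|].
      rewrite Hu, IH0, IH1, (Hpow r n Hr), (Hpow s n Hs); field; intros E; apply Hrs; lra. }
  intros n; apply H.
Qed.

Lemma G_binet (a b : R) (j : Z) :
  G a b j = ((b - a * beta) * powerRZ alpha j + (a * alpha - b) * powerRZ beta j) / (alpha - beta).
Proof.
  pose proof alpha_sqr; pose proof alpha_bounds.
  assert (Hab : alpha - beta <> 0) by (rewrite beta_alpha; lra).
  destruct j as [|k|k]; simpl.
  - field; exact Hab.
  - apply (two_step_rec_binet 1 1).
    + lra.
    + lra.
    + rewrite beta_alpha; nra.
    + intros n; simpl; ring.
    + reflexivity.
    + reflexivity.
  - rewrite <- !pow_inv.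
    rewrite (two_step_rec_binet (-1) 1 (/ alpha) (/ beta) a (b - a) (gib_neg a b)).
    + rewrite inv_alpha, inv_beta, beta_alpha; field; lra.
    + rewrite inv_alpha, inv_beta; lra.
    + rewrite inv_alpha; nra.
    + rewrite inv_beta; nra.
    + intros n; simpl; ring.
    + reflexivity.
    + reflexivity.
Qed.

Lemma is_series_gibonacci_binet (a b : R) (t : Z) :
  is_series (fun k : nat => let n := S k in
      Binomial.C (2 * n)%nat n * (Onum n * G a b (Z.of_nat n + t)) / 12 ^ n)
    ((b - a * beta) * powerRZ alpha t / (alpha - beta) * Onum_gf (alpha / 12)
     + (a * alpha - b) * powerRZ beta t / (alpha - beta) * Onum_gf (beta / 12)).
Proof.
  pose proof alpha_bounds; pose proof beta_alpha.
  assert (Halpha : Rabs (alpha / 12) < / 4) by (apply Rabs_def1; lra).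
  assert (Hbeta : Rabs (beta / 12) < / 4) by (apply Rabs_def1; lra).
  eapply is_series_ext;
    [|exact (is_series_plus _ _ _ _
               (is_series_scal_l _ _ _ (is_series_cbinom_Onum _ Halpha))
               (is_series_scal_l _ _ _ (is_series_cbinom_Onum _ Hbeta)))].
  intros k; cbv zeta; lazymatch goal with |- ?l = ?r => change (@eq R l r) end.
  change (plus ?x ?y) with (x + y);
    change (scal ?c ?x) with (c * x).
  rewrite G_binet, !powerRZ_add, <- !pow_powerRZ by lra.
  unfold cbinom_Onum, cbinom, Rdiv; rewrite !Rpow_mult_distr, !pow_inv; ring.
Qed.

Definition kappa : R := sqrt 3 * sqrt (alpha + 2) / 10.

Lemma kappa_pos : 0 < kappa.
Proof.
  pose proof alpha_bounds; unfold kappa.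
  assert (0 < sqrt 3) by (apply sqrt_lt_R0; lra).
  assert (0 < sqrt (alpha + 2)) by (apply sqrt_lt_R0; lra).
  nra.
Qed.

Lemma kappa_sqr : kappa * kappa = 3 * (alpha + 2) / 100.
Proof.
  pose proof alpha_bounds; unfold kappa.
  replace (sqrt 3 * sqrt (alpha + 2) / 10 * (sqrt 3 * sqrt (alpha + 2) / 10))
    with (sqrt 3 * sqrt 3 * (sqrt (alpha + 2) * sqrt (alpha + 2)) / 100) by field.
  rewrite !sqrt_sqrt; lra.
Qed.

Lemma sqrt_1_sub_alpha_3 : sqrt (1 - 4 * (alpha / 12)) = / (2 * sqrt 5 * kappa).
Proof.
  pose proof alpha_sqr; pose proof alpha_bounds; pose proof kappa_pos.
  apply sqrt_lem_1; [lra| |].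
  - apply Rlt_le, Rinv_0_lt_compat; rewrite sqrt5_alpha; nra.
  - rewrite <- Rinv_mult.
    replace (2 * sqrt 5 * kappa * (2 * sqrt 5 * kappa))
      with (4 * (sqrt 5 * sqrt 5) * (kappa * kappa)) by ring.
    rewrite sqrt_sqrt, kappa_sqr by lra; field_simplify_eq; [nra|lra].
Qed.

Lemma sqrt_1_sub_beta_3 : sqrt (1 - 4 * (beta / 12)) = alpha / (2 * sqrt 5 * kappa).
Proof.
  pose proof alpha_sqr; pose proof alpha_bounds; pose proof kappa_pos.
  assert (0 < sqrt 5) by (rewrite sqrt5_alpha; lra).
  apply sqrt_lem_1; [rewrite beta_alpha; lra| |].
  - apply Rlt_le, Rdiv_lt_0_compat; nra.
  - replace (alpha / (2 * sqrt 5 * kappa) * (alpha / (2 * sqrt 5 * kappa)))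
      with (alpha * alpha / (4 * (sqrt 5 * sqrt 5) * (kappa * kappa))) by (field; lra).
    rewrite sqrt_sqrt, kappa_sqr, beta_alpha by lra; field_simplify_eq; [nra|lra].
Qed.

Lemma Onum_gf_alpha :
  Onum_gf (alpha / 12) = sqrt 5 * kappa * (ln alpha - ln (sqrt 5 / 3)).
Proof.
  pose proof alpha_sqr; pose proof alpha_bounds; pose proof kappa_pos.
  assert (0 < sqrt 5) by (rewrite sqrt5_alpha; lra).
  assert (E : 1 - 4 * (alpha / 12) = sqrt 5 / 3 / alpha)
    by (rewrite sqrt5_alpha; field_simplify_eq; [nra|lra]).
  unfold Onum_gf; rewrite sqrt_1_sub_alpha_3, E, ln_div by lra; field; lra.
Qed.

Lemma Onum_gf_beta :
  Onum_gf (beta / 12) = - (sqrt 5 * kappa / alpha) * (ln alpha + ln (sqrt 5 / 3)).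
Proof.
  pose proof alpha_sqr; pose proof alpha_bounds; pose proof kappa_pos.
  assert (0 < sqrt 5) by (rewrite sqrt5_alpha; lra).
  assert (E : 1 - 4 * (beta / 12) = alpha * (sqrt 5 / 3))
    by (rewrite beta_alpha, sqrt5_alpha; nra).
  unfold Onum_gf; rewrite sqrt_1_sub_beta_3, E, ln_mult by lra; field; lra.
Qed.

Lemma powerRZ_succ (x : R) (t : Z) : x <> 0 -> powerRZ x (t + 1) = powerRZ x t * x.
Proof. intros Hx; rewrite powerRZ_add by exact Hx; simpl; ring. Qed.

Lemma powerRZ_pred (x : R) (t : Z) : x <> 0 -> powerRZ x (t - 1) = powerRZ x t / x.
Proof.
  intros Hx; change (t - 1)%Z with (t + -1)%Z; rewrite powerRZ_add by exact Hx.
  simpl; field; exact Hx.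
Qed.

Lemma alpha_add_2 : alpha + 2 = sqrt 5 * alpha.
Proof. pose proof alpha_sqr; rewrite sqrt5_alpha; nra. Qed.

Lemma beta_add_2 : beta + 2 = - sqrt 5 * beta.
Proof. pose proof alpha_sqr; rewrite sqrt5_alpha, beta_alpha; nra. Qed.

Lemma gibonacci_value (a b : R) (t : Z) :
  (b - a * beta) * powerRZ alpha t / (alpha - beta) * Onum_gf (alpha / 12)
  + (a * alpha - b) * powerRZ beta t / (alpha - beta) * Onum_gf (beta / 12)
  = kappa *
      ((a * (powerRZ alpha (t - 1) - powerRZ beta t)
        + b * (powerRZ alpha t - powerRZ beta (t + 1))) * ln alpha
       - (a * (powerRZ alpha (t - 1) + powerRZ beta t)
          + b * (powerRZ alpha t + powerRZ beta (t + 1))) * ln (sqrt 5 / 3)).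
Proof.
  pose proof alpha_bounds; pose proof beta_alpha.
  rewrite Onum_gf_alpha, Onum_gf_beta, powerRZ_pred, powerRZ_succ by lra.
  set (L := ln (sqrt 5 / 3)); rewrite <- alpha_sub_beta.
  set (X := powerRZ alpha t); set (Y := powerRZ beta t).
  unfold beta; field; split; nra.
Qed.

Lemma lucas_value (t : Z) :
  kappa *
    ((2 * (powerRZ alpha (t - 1) - powerRZ beta t)
      + 1 * (powerRZ alpha t - powerRZ beta (t + 1))) * ln alpha
     - (2 * (powerRZ alpha (t - 1) + powerRZ beta t)
        + 1 * (powerRZ alpha t + powerRZ beta (t + 1))) * ln (sqrt 5 / 3))
  = sqrt 15 * sqrt (alpha + 2) / 10 *
      ((powerRZ alpha t + powerRZ beta (t + 1)) * ln alpha
       - (powerRZ alpha t - powerRZ beta (t + 1)) * ln (sqrt 5 / 3)).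
Proof.
  pose proof alpha_bounds; pose proof beta_alpha.
  assert (Halpha : 2 * powerRZ alpha (t - 1) + powerRZ alpha t = sqrt 5 * powerRZ alpha t).
  { rewrite powerRZ_pred by lra.
    replace (2 * (powerRZ alpha t / alpha) + powerRZ alpha t)
      with (powerRZ alpha t * (alpha + 2) / alpha) by (field; lra).
    rewrite alpha_add_2; field; lra. }
  assert (Hbeta : 2 * powerRZ beta t + powerRZ beta (t + 1) = - sqrt 5 * powerRZ beta (t + 1)).
  { rewrite powerRZ_succ by lra.
    replace (2 * powerRZ beta t + powerRZ beta t * beta)
      with (powerRZ beta t * (beta + 2)) by ring.
    rewrite beta_add_2; ring. }
  replace (sqrt 15) with (sqrt 3 * sqrt 5) by (rewrite <- sqrt_mult by lra; f_equal; ring).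
  unfold kappa.
  replace (2 * (powerRZ alpha (t - 1) - powerRZ beta t) + 1 * (powerRZ alpha t - powerRZ beta (t + 1)))
    with ((2 * powerRZ alpha (t - 1) + powerRZ alpha t) - (2 * powerRZ beta t + powerRZ beta (t + 1)))
    by ring.
  replace (2 * (powerRZ alpha (t - 1) + powerRZ beta t) + 1 * (powerRZ alpha t + powerRZ beta (t + 1)))
    with ((2 * powerRZ alpha (t - 1) + powerRZ alpha t) + (2 * powerRZ beta t + powerRZ beta (t + 1)))
    by ring.
  rewrite Halpha, Hbeta; field.
Qed.

Lemma is_series_gibonacci (a b : R) (t : Z) :
  is_series (fun k : nat => let n := S k in
      Binomial.C (2 * n)%nat n * (Onum n * G a b (Z.of_nat n + t)) / 12 ^ n)
    (kappa *
      ((a * (powerRZ alpha (t - 1) - powerRZ beta t)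
        + b * (powerRZ alpha t - powerRZ beta (t + 1))) * ln alpha
       - (a * (powerRZ alpha (t - 1) + powerRZ beta t)
          + b * (powerRZ alpha t + powerRZ beta (t + 1))) * ln (sqrt 5 / 3))).
Proof. rewrite <- gibonacci_value; apply is_series_gibonacci_binet. Qed.

Theorem theorem16 : forall t : Z,
  is_series (fun k : nat => let n := S k in
      Binomial.C (2 * n)%nat n * (Onum n * Luc (Z.of_nat n + t)) / 12 ^ n)
    (sqrt 15 * sqrt (alpha + 2) / 10 *
      ((powerRZ alpha t + powerRZ beta (t + 1)) * ln alpha
       - (powerRZ alpha t - powerRZ beta (t + 1)) * ln (sqrt 5 / 3)))
  /\
  is_series (fun k : nat => let n := S k in
      Binomial.C (2 * n)%nat n * (Onum n * Fib (Z.of_nat n + t)) / 12 ^ n)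
    (sqrt 3 * sqrt (alpha + 2) / 10 *
      ((powerRZ alpha t - powerRZ beta (t + 1)) * ln alpha
       - (powerRZ alpha t + powerRZ beta (t + 1)) * ln (sqrt 5 / 3)))
  /\
  (forall a b : R, ~ (a = 0 /\ b = 0) ->
    is_series (fun k : nat => let n := S k in
        Binomial.C (2 * n)%nat n * (Onum n * G a b (Z.of_nat n + t)) / 12 ^ n)
      (sqrt 3 * sqrt (alpha + 2) / 10 *
        ((a * (powerRZ alpha (t - 1) - powerRZ beta t)
          + b * (powerRZ alpha t - powerRZ beta (t + 1))) * ln alpha
         - (a * (powerRZ alpha (t - 1) + powerRZ beta t)
            + b * (powerRZ alpha t + powerRZ beta (t + 1))) * ln (sqrt 5 / 3)))).
Proof.
  intros t; split; [|split].
  - rewrite <- lucas_value; exact (is_series_gibonacci 2 1 t).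
  - pose proof (is_series_gibonacci 0 1 t) as Hfib.
    rewrite !Rmult_0_l, !Rplus_0_l, !Rmult_1_l in Hfib; exact Hfib.
  - intros a b _; exact (is_series_gibonacci a b t).
Qed.
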